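(* Let $K$ be a field and let $G_1$ and $G_2$ be non-empty finite simple graphs on $v_1$ and $v_2$ vertices, respectively. Let $G_0 := G_1 \# G_2$ be the zero-sum obtained by identifying a vertex of $G_1$ with a vertex of $G_2$; its cut ideal $I_{G_0}$ lies in a polynomial ring $R$ with $2^{v_1+v_2-2}$ variables. Let $G_1 \sqcup G_2$ be the disjoint union; its cut ideal lies in a polynomial ring $S$ with $2^{v_1+v_2-1}$ variables. Then there is an injective graded $K$-algebra homomorphism $\alpha: R \to S$ mapping the variables of $R$ onto variables of $S$ such that $$I_{G_1\sqcup G_2} = \alpha(I_{G_0}) + L,$$ where $\alpha(I_{G_0})$ denotes the ideal of $S$ generated by the image of $I_{G_0}$ and $L \subset S$ is an ideal minimally generated by $2^{v_1+v_2-2}$ linear forms. Furthermore, the cut variety $X_{G_1\sqcup G_2} \subset \mathbb{P}^{2^{v_1+v_2-1}-1}$ is isomorphic to the Segre embedding of $X_{G_1}\times X_{G_2}$ into $\mathbb{P}^{2^{v_1+v_2-2}-1}$.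
   Context: For a finite simple graph $G$ with vertex set $V(G)$ and edge set $E(G)$, an unordered partition $A|B$ of $V(G)$ (into two sets, one of which may be empty) defines the cut $Cut(A|B)$, the set of edges with one endpoint in $A$ and the other in $B$. The cut ideal $I_G$ is the kernel of the $K$-algebra homomorphism $\phi_G: K[q_{A|B} : A|B \text{ unordered partition of } V(G)] \to K[s_{ij}, t_{ij} : \{i,j\} \in E(G)]$, $q_{A|B} \mapsto \prod_{\{i,j\}\in Cut(A|B)} s_{ij} \prod_{\{i,j\}\in E(G)\setminus Cut(A|B)} t_{ij}$; this polynomial ring has $2^{|V(G)|-1}$ variables, and the cut variety $X_G\subset\mathbb{P}^{2^{|V(G)|-1}-1}$ is the projective variety defined by $I_G$. The zero-sum $G_1\# G_2$ of graphs $G_1=(V_1,E_1)$, $G_2=(V_2,E_2)$ with $V_1\cap V_2$ a single vertex is the graph with vertex set $V_1\cup V_2$ and edge set $E_1\cup E_2$. *)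

From HB Require Import structures.
From mathcomp Require Import all_boot all_order all_algebra.
From mathcomp Require Import mpoly.

Set Implicit Arguments.
Unset Strict Implicit.
Unset Printing Implicit Defensive.

Import GRing.Theory.
Local Open Scope ring_scope.

Definition ideal_gen (R : comNzRingType) (S : R -> Prop) : R -> Prop :=
  fun p => exists (n : nat) (c g : 'I_n -> R),
      (forall i, S (g i)) /\ p = \sum_(i < n) c i * g i.

Definition ideal_add (R : comNzRingType) (I J : R -> Prop) : R -> Prop :=
  fun p => exists a b, I a /\ J b /\ p = a + b.

Definition ideal_eq (R : comNzRingType) (I J : R -> Prop) : Prop :=
  forall p, I p <-> J p.

Definition ideal_image (R S : comNzRingType) (f : R -> S) (I : R -> Prop) : S -> Prop :=
  ideal_gen (fun q => exists p, I p /\ q = f p).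

Definition min_gen_linear (K : fieldType) (m : nat) (L : {mpoly K[m]} -> Prop)
    (N : nat) : Prop :=
  exists g : 'I_N -> {mpoly K[m]},
    injective g /\ (forall i, g i \is 1.-homog) /\
    ideal_eq (ideal_gen (fun q => exists i, q = g i)) L /\
    (forall j, ~ ideal_eq (ideal_gen (fun q => exists i, i != j /\ q = g i)) L).

Definition Xv (K : fieldType) (T : finType) (t : T) : {mpoly K[#|T|]} :=
  'X_(enum_rank t).
Arguments Xv K {T} t.

Definition vmap (K : fieldType) (n m : nat) (f : 'I_n -> 'I_m)
    (p : {mpoly K[n]}) : {mpoly K[m]} :=
  p \mPo [tuple 'X_(f i) | i < n].

Section Cut.
Variables (K : fieldType) (V : finType) (e : rel V).

(* unordered partitions A|B of V (one part may be empty), as the set {A, B} *)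
Definition is_upart (P : {set {set V}}) : bool :=
  [exists A : {set V}, P == [set A; ~: A]].
Definition upart := {P : {set {set V}} | is_upart P}.
HB.instance Definition _ := Finite.on upart.

Definition edgeT := {E : {set V} | [exists i, exists j, e i j && (E == [set i; j])]}.
HB.instance Definition _ := Finite.on edgeT.

Definition cuts (P : upart) (E : edgeT) : bool :=
  [exists A in val P, #|val E :&: A| == 1%N].

(* variables s_E = inl E, t_E = inr E *)
Definition cut_image (P : upart) : {mpoly K[#|{: edgeT + edgeT}|]} :=
  \prod_(E : edgeT) (if cuts P E then Xv K (inl E : (edgeT + edgeT)%type)
                     else Xv K (inr E : (edgeT + edgeT)%type)).

Definition cut_map (p : {mpoly K[#|{: upart}|]}) : {mpoly K[#|{: edgeT + edgeT}|]} :=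
  p \mPo [tuple cut_image (enum_val i) | i < #|{: upart}|].

Definition cut_ideal : {mpoly K[#|{: upart}|]} -> Prop := fun p => cut_map p = 0.
End Cut.
Arguments cut_map K {V} e p.
Arguments cut_ideal K {V} e p.
Arguments cut_image K {V} e P.

Section Sums.
Variables (V1 V2 : finType) (e1 : rel V1) (e2 : rel V2) (u1 : V1) (u2 : V2).

Definition dunion_rel : rel (V1 + V2) := fun x y =>
  match x, y with
  | inl a, inl b => e1 a b
  | inr c, inr d => e2 c d
  | _, _ => false
  end.

Definition glue (x : V1 + V2) : V1 + V2 := if x == inr u2 then inl u1 else x.

Definition zs_vert := {x : V1 + V2 | x != inr u2}.
HB.instance Definition _ := Finite.on zs_vert.

Definition zs_rel : rel zs_vert := fun x y =>
  [exists p : (V1 + V2) * (V1 + V2),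
     [&& dunion_rel p.1 p.2, glue p.1 == val x & glue p.2 == val y]].
End Sums.
Arguments zs_vert V1 {V2} u2.
Arguments zs_rel {V1 V2} e1 e2 u1 u2.

Section Segre.
Variables (K : fieldType) (V1 V2 : finType) (e1 : rel V1) (e2 : rel V2).
Let T1 : finType := upart V1.
Let T2 : finType := upart V2.

Definition ext1 (p : {mpoly K[#|{: T1}|]}) : {mpoly K[#|{: T1 + T2}|]} :=
  vmap (fun i => enum_rank (inl (enum_val i) : (T1 + T2)%type)) p.
Definition ext2 (p : {mpoly K[#|{: T2}|]}) : {mpoly K[#|{: T1 + T2}|]} :=
  vmap (fun i => enum_rank (inr (enum_val i) : (T1 + T2)%type)) p.

Definition segre_map (f : {mpoly K[#|{: T1 * T2}|]}) : {mpoly K[#|{: T1 + T2}|]} :=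
  f \mPo [tuple Xv K (inl (enum_val i).1 : (T1 + T2)%type) *
                Xv K (inr (enum_val i).2 : (T1 + T2)%type) | i < #|{: T1 * T2}|].

(* homogeneous ideal of the Segre image of X_{G1} x X_{G2} in P^{|T1||T2|-1}:
   kernel of K[z] -> K[x,y] / (I_{G1} + I_{G2}) *)
Definition segre_ideal : {mpoly K[#|{: T1 * T2}|]} -> Prop := fun f =>
  ideal_add (ideal_image ext1 (cut_ideal K e1)) (ideal_image ext2 (cut_ideal K e2))
            (segre_map f).
End Segre.
Arguments segre_ideal K {V1 V2} e1 e2 f.

(* A cut only depends on which side of each edge the endpoints
   lie.  For the zero-sum, the partitions of G0 are exactly the partitions of
   G1 + G2 that put u1 and u2 on the same side ("aligned" ones); every other
   partition becomes aligned after complementing its G2-part, which changes no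
   cut.  Hence I_{G1+G2} is generated by the image of I_{G0} under x_P |-> x_P
   together with the linear forms x_P - x_{flip P}, one for each aligned P,
   and evaluation at the unaligned partitions shows that none of these forms
   is redundant.  For the Segre part, the cut monomial of a partition of
   G1 + G2 is the product of the cut monomials of its restrictions, on
   disjoint sets of variables; the kernel of such a product map is
   I_{G1} + I_{G2}, by writing an element of the kernel as sum_j a_j b_j and
   diagonalising the coefficients of the b_j by Gaussian elimination. *)

From HB Require Import structures.
From mathcomp Require Import all_boot all_order all_algebra.
From mathcomp Require Import mpoly.
Set Implicit Arguments.
Unset Strict Implicit.
Unset Printing Implicit Defensive.
Import GRing.Theory.
Local Open Scope ring_scope.

Section IdealGen.
Variables (R : comNzRingType) (S : R -> Prop).

Lemma ideal_gen_mem x : S x -> ideal_gen S x.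
Proof.
by move=> Sx; exists 1%N, (fun _ => 1), (fun _ => x); rewrite big_ord1 mul1r.
Qed.

Lemma ideal_gen0 : ideal_gen S 0.
Proof. by exists 0%N, (fun _ => 0), (fun _ => 0); rewrite big_ord0; split=> // -[]. Qed.

Lemma ideal_genD x y : ideal_gen S x -> ideal_gen S y -> ideal_gen S (x + y).
Proof.
move=> [n [c [g [Sg ->]]]] [m [d [h [Sh ->]]]].
exists (n + m)%N, (fun i => match split i with inl a => c a | inr b => d b end),
  (fun i => match split i with inl a => g a | inr b => h b end).
split; first by move=> i; case: (split i).
rewrite big_split_ord /=; congr (_ + _); apply: eq_bigr => i _.
  by rewrite (unsplitK (inl i)).
by rewrite (unsplitK (inr i)).
Qed.

Lemma ideal_genMl r x : ideal_gen S x -> ideal_gen S (r * x).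
Proof.
move=> [n [c [g [Sg ->]]]]; exists n, (fun i => r * c i), g; split=> //.
by rewrite mulr_sumr; apply: eq_bigr => i _; rewrite mulrA.
Qed.

Lemma ideal_genN x : ideal_gen S x -> ideal_gen S (- x).
Proof. by move=> Sx; rewrite -mulN1r; apply: ideal_genMl. Qed.

Lemma ideal_gen_sum (I : Type) (s : seq I) (P : pred I) (F : I -> R) :
  (forall i, P i -> ideal_gen S (F i)) -> ideal_gen S (\sum_(i <- s | P i) F i).
Proof. by move=> SF; apply: big_ind => //; [exact: ideal_gen0 | exact: ideal_genD]. Qed.

Lemma ideal_gen_prodB (I : Type) (s : seq I) (a b : I -> R) :
  (forall i, ideal_gen S (a i - b i)) ->
  ideal_gen S (\prod_(i <- s) a i - \prod_(i <- s) b i).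
Proof.
move=> Sab; elim: s => [|x s IHs]; first by rewrite !big_nil subrr; exact: ideal_gen0.
rewrite !big_cons.
have -> : a x * \prod_(j <- s) a j - b x * \prod_(j <- s) b j =
  a x * (\prod_(j <- s) a j - \prod_(j <- s) b j) + (\prod_(j <- s) b j) * (a x - b x).
  by rewrite !mulrBr [_ * a x]mulrC [_ * b x]mulrC addrA subrK.
by apply: ideal_genD; apply: ideal_genMl.
Qed.

Lemma ideal_gen_expB (a b : R) k :
  ideal_gen S (a - b) -> ideal_gen S (a ^+ k - b ^+ k).
Proof.
move=> Sab; have := ideal_gen_prodB (index_iota 0 k) (fun=> Sab).
by rewrite !prodr_const_nat subn0.
Qed.

Lemma ideal_gen_kernel (T : nzRingType) (F : {rmorphism R -> T}) x :
  (forall y, S y -> F y = 0) -> ideal_gen S x -> F x = 0.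
Proof.
move=> FS [n [c [g [Sg ->]]]]; rewrite rmorph_sum big1 // => i _.
by rewrite rmorphM (FS _ (Sg i)) mulr0.
Qed.

End IdealGen.

Lemma ideal_gen_trans (R : comNzRingType) (S S' : R -> Prop) x :
  (forall y, S y -> ideal_gen S' y) -> ideal_gen S x -> ideal_gen S' x.
Proof.
move=> SS' [n [c [g [Sg ->]]]]; apply: ideal_gen_sum => i _.
by apply: ideal_genMl; exact: SS'.
Qed.

Lemma eq_mpoly_rmorph (K : comNzRingType) n (T : nzRingType)
    (F G : {rmorphism {mpoly K[n]} -> T}) :
  (forall c, F c%:MP = G c%:MP) -> (forall i, F 'X_i = G 'X_i) -> F =1 G.
Proof.
move=> FGC FGX p; rewrite [p]mpolyE !rmorph_sum; apply: eq_bigr => m _.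
rewrite -!mul_mpolyC !rmorphM FGC mpolyXE_id !rmorph_prod; congr (_ * _).
by apply: eq_bigr => i _; rewrite !rmorphXn FGX.
Qed.

Section Substitution.
Variable K : fieldType.

Lemma comp_mpolyA n k l (t : n.-tuple {mpoly K[k]}) (u : k.-tuple {mpoly K[l]}) p :
  (p \mPo t) \mPo u = p \mPo [tuple tnth t i \mPo u | i < n].
Proof.
pose G := comp_mpoly [tuple tnth t i \mPo u | i < n].
apply: (eq_mpoly_rmorph (F := comp_mpoly u \o comp_mpoly t) (G := G)) => [c|i];
  rewrite /G /=.
  by rewrite !comp_mpolyC.
by rewrite !comp_mpolyXU -!tnth_nth tnth_mktuple.
Qed.

Variables (n m : nat) (f : 'I_n -> 'I_m).

HB.instance Definition _ :=
  GRing.LRMorphism.copy (vmap (K:=K) f) (comp_mpoly [tuple 'X_(f i) | i < n]).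

Lemma vmapC c : vmap (K:=K) f c%:MP = c%:MP.
Proof. exact: comp_mpolyC. Qed.

Lemma vmapZ c p : vmap (K:=K) f (c *: p) = c *: vmap f p.
Proof. exact: comp_mpolyZ. Qed.

Lemma vmapX i : vmap (K:=K) f 'X_i = 'X_(f i).
Proof. by rewrite /vmap comp_mpolyXU -tnth_nth tnth_mktuple. Qed.

Lemma vmap_comp l (t : m.-tuple {mpoly K[l]}) p :
  vmap f p \mPo t = p \mPo [tuple tnth t (f i) | i < n].
Proof.
rewrite comp_mpolyA; congr (_ \mPo _); apply: eq_mktuple => i.
by rewrite tnth_mktuple comp_mpolyXU -tnth_nth.
Qed.

Lemma comp_vmap k (t : k.-tuple {mpoly K[n]}) p :
  vmap f (p \mPo t) = p \mPo [tuple vmap f (tnth t i) | i < k].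
Proof. exact: comp_mpolyA. Qed.

Lemma vmapK (g : 'I_m -> 'I_n) : cancel f g -> cancel (vmap (K:=K) f) (vmap g).
Proof.
move=> fK p; rewrite [vmap g _]/vmap vmap_comp -[RHS]comp_mpoly_id.
by congr (_ \mPo _); apply: eq_mktuple => i; rewrite tnth_mktuple fK.
Qed.

End Substitution.

Lemma subst_diff_ideal (K : fieldType) n (t : n.-tuple {mpoly K[n]}) p :
  ideal_gen (fun q => exists i, q = 'X_i - tnth t i) (p - (p \mPo t)).
Proof.
rewrite comp_mpolyEX [X in X - _]mpolyE -sumrB; apply: ideal_gen_sum => m _.
rewrite -scalerBr -mul_mpolyC; apply: ideal_genMl.
rewrite comp_mpolyX mpolyXE_id; apply: ideal_gen_prodB => i.
by apply: ideal_gen_expB; apply: ideal_gen_mem; exists i.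
Qed.

Section EchelonBasis.
Variables (F : fieldType) (N m : nat) (M : 'M[F]_(N, m)).

Lemma col_ebase_annihilator (A : comNzRingType) (f : {rmorphism F -> A})
    (a : 'rV[A]_N) (k : 'I_N) :
  a *m map_mx f M = 0 -> (k < \rank M)%N -> (a *m map_mx f (col_ebase M)) 0 k = 0.
Proof.
move=> aM0 kr; set b := a *m _.
have bpid0 : b *m (pid_mx (\rank M) : 'M_(N, m)) = 0.
  have : b *m pid_mx (\rank M) *m map_mx f (row_ebase M) = 0.
    by rewrite -aM0 -[in X in _ = _ *m X](mulmx_ebase M) !map_mxM map_pid_mx /b !mulmxA.
  move/(congr1 (mulmx^~ (map_mx f (invmx (row_ebase M))))).
  by rewrite mul0mx -mulmxA -map_mxM mulmxV ?row_ebase_unit // map_mx1 mulmx1.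
have km : (k < m)%N by apply: leq_trans kr (rank_leq_col M).
have := congr1 (fun X : 'rV[A]_m => X 0 (Ordinal km)) bpid0.
rewrite mxE (bigD1 k) //= big1 => [|l lk]; last first.
  by rewrite [pid_mx _ _ _]mxE /= (inj_eq val_inj) (negbTE lk) mulr0.
by rewrite [pid_mx _ _ _]mxE /= eqxx kr mulr1 addr0 => ->; rewrite mxE.
Qed.

Lemma row_invmx_col_ebase_mul (k : 'I_N) :
  (\rank M <= k)%N -> row k (invmx (col_ebase M) *m M) = 0.
Proof.
move=> rk; rewrite -[in X in _ *m X](mulmx_ebase M) !mulmxA mulVmx ?col_ebase_unit // mul1mx.
rewrite row_mul (_ : row k _ = 0) ?mul0mx //.
by apply/rowP => j; rewrite !mxE ltnNge rk andbF.
Qed.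

End EchelonBasis.

Lemma sum_mul_change_basis (F : fieldType) (A : algType F) N (Q P : 'M[F]_N)
    (x y : 'I_N -> A) : Q *m P = 1%:M ->
  \sum_(j < N) x j * y j =
  \sum_(k < N) (\sum_(j < N) Q j k *: x j) * (\sum_(l < N) P k l *: y l).
Proof.
move=> QP; have QPE j l : \sum_(k < N) Q j k * P k l = (j == l)%:R.
  by have := congr1 (fun X : 'M[F]_N => X j l) QP; rewrite !mxE.
symmetry; rewrite (eq_bigr (fun k =>
  \sum_(j < N) \sum_(l < N) (Q j k * P k l) *: (x j * y l))); last first.
  move=> k _; rewrite mulr_suml; apply: eq_bigr => j _.
  by rewrite mulr_sumr; apply: eq_bigr => l _; rewrite -scalerAl -scalerAr scalerA.
rewrite exchange_big /=; apply: eq_bigr => j _; rewrite exchange_big /=.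
under eq_bigr => l _ do rewrite -scaler_suml QPE.
rewrite (bigD1 j) //= big1 ?eqxx ?scale1r ?addr0 // => l lj.
by rewrite eq_sym (negbTE lj) scale0r.
Qed.

Section SumOfProducts.
Variables (K : fieldType) (nx ny nxy : nat).
Variables (fx : 'I_nx -> 'I_nxy) (fy : 'I_ny -> 'I_nxy).
Hypothesis fxy_cover : forall v, (exists i, fx i = v) \/ (exists j, fy j = v).

Definition sum_of_products (h : {mpoly K[nxy]}) :=
  exists s : seq ({mpoly K[nx]} * {mpoly K[ny]}),
    h = \sum_(x <- s) vmap fx x.1 * vmap fy x.2.

Lemma sum_of_products1 : sum_of_products 1.
Proof. by exists [:: (1, 1)]; rewrite big_seq1 /= !rmorph1 mulr1. Qed.

Lemma sum_of_productsD x y :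
  sum_of_products x -> sum_of_products y -> sum_of_products (x + y).
Proof. by move=> [s ->] [s' ->]; exists (s ++ s'); rewrite big_cat. Qed.

Lemma sum_of_productsM x y :
  sum_of_products x -> sum_of_products y -> sum_of_products (x * y).
Proof.
move=> [s ->] [s' ->]; exists [seq (u.1 * v.1, u.2 * v.2) | u <- s, v <- s'].
rewrite big_allpairs_dep /= mulr_suml; apply: eq_bigr => u _.
rewrite mulr_sumr; apply: eq_bigr => v _ /=.
by rewrite !rmorphM mulrACA.
Qed.

Lemma sum_of_productsZ c x : sum_of_products x -> sum_of_products (c *: x).
Proof.
move=> [s ->]; exists [seq (c *: u.1, u.2) | u <- s].
by rewrite big_map scaler_sumr; apply: eq_bigr => u _; rewrite vmapZ scalerAl.
Qed.

Lemma sum_of_productsX v : sum_of_products 'X_v.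
Proof.
case: (fxy_cover v) => [[i <-]|[j <-]].
  by exists [:: ('X_i, 1)]; rewrite big_seq1 /= rmorph1 mulr1 vmapX.
by exists [:: (1, 'X_j)]; rewrite big_seq1 /= rmorph1 mul1r vmapX.
Qed.

Lemma mpoly_sum_of_products h : exists N (a : 'I_N -> {mpoly K[nx]})
    (b : 'I_N -> {mpoly K[ny]}), h = \sum_(j < N) vmap fx (a j) * vmap fy (b j).
Proof.
have [s ->] : sum_of_products h.
  rewrite [h]mpolyE; apply: big_ind => [|x y|m _]; first by exists [::]; rewrite big_nil.
    exact: sum_of_productsD.
  apply: sum_of_productsZ; rewrite mpolyXE_id.
  apply: big_ind => [|x y|i _]; [exact: sum_of_products1|exact: sum_of_productsM|].
  elim: (m i) => [|k IHk]; first by rewrite expr0; exact: sum_of_products1.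
  by rewrite exprS; apply: sum_of_productsM => //; exact: sum_of_productsX.
exists (size s), (fun j => (tnth (in_tuple s) j).1), (fun j => (tnth (in_tuple s) j).2).
by rewrite big_tnth.
Qed.

End SumOfProducts.

Section SeparateVariables.
Variables (K : fieldType) (n1 n2 nc : nat).
Variables (g1 : 'I_n1 -> 'I_nc) (g2 : 'I_n2 -> 'I_nc).
Hypotheses (g1_inj : injective g1) (g2_inj : injective g2)
  (g12_disjoint : forall i j, g1 i != g2 j).

Definition separate_var (v : 'I_nc) : {mpoly {mpoly K[n1]}[n2]} :=
  if [pick i | g1 i == v] is Some i then ('X_i : {mpoly K[n1]})%:MP
  else if [pick j | g2 j == v] is Some j then 'X_j else 0.

(* The variables in the image of g1 become coefficients, those in the image
   of g2 stay variables. *)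
Definition separate_vars : {mpoly K[nc]} -> {mpoly {mpoly K[n1]}[n2]} :=
  comp_mpoly [tuple separate_var v | v < nc] \o map_mpoly (@mpolyC n1 K).

HB.instance Definition _ := GRing.RMorphism.on separate_vars.

Lemma separate_varsC c : separate_vars c%:MP = (c%:MP)%:MP.
Proof. by rewrite /separate_vars /= map_mpolyC comp_mpolyC. Qed.

Lemma separate_varsX v : separate_vars 'X_v = separate_var v.
Proof. by rewrite /separate_vars /= map_mpolyX comp_mpolyXU -tnth_nth tnth_mktuple. Qed.

Lemma separate_vars_vmap1 a : separate_vars (vmap g1 a) = a%:MP.
Proof.
apply: (eq_mpoly_rmorph (F := separate_vars \o vmap g1) (G := @mpolyC n2 _)) => [c|i] /=.
  by rewrite vmapC separate_varsC.
rewrite vmapX separate_varsX /separate_var.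
by case: pickP => [i' /eqP /g1_inj -> //|/(_ i)]; rewrite eqxx.
Qed.

Lemma separate_vars_vmap2 b : separate_vars (vmap g2 b) = map_mpoly (@mpolyC n1 K) b.
Proof.
apply: (eq_mpoly_rmorph (F := separate_vars \o vmap g2)
                        (G := map_mpoly (@mpolyC n1 K))) => [c|j] /=.
  by rewrite vmapC separate_varsC map_mpolyC.
rewrite vmapX separate_varsX /separate_var map_mpolyX.
case: pickP => [i /eqP g1ij|_]; first by have := g12_disjoint i j; rewrite g1ij eqxx.
by case: pickP => [j' /eqP /g2_inj -> //|/(_ j)]; rewrite eqxx.
Qed.

End SeparateVariables.

Section CoefficientMatrix.
Variables (K : fieldType) (n N : nat) (c : 'I_N -> {mpoly K[n]}).

Definition coef_supp := undup (flatten [seq msupp (c j) | j <- enum 'I_N]).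

Definition coef_mx : 'M[K]_(N, size coef_supp) :=
  \matrix_(j, k) (c j)@_(nth 0%MM coef_supp k).

Lemma coef_mx_comb_eq0 (v : 'rV[K]_N) :
  v *m coef_mx = 0 -> \sum_(j < N) v 0 j *: c j = 0.
Proof.
move=> vM0; apply/mpolyP => m; rewrite raddf_sum mcoeff0.
have [mU|mU] := boolP (m \in coef_supp); last first.
  rewrite big1 // => j _; rewrite /= mcoeffZ memN_msupp_eq0 ?mulr0 //.
  apply: contra mU => mj; rewrite mem_undup; apply/flatten_mapP.
  by exists j; rewrite ?mem_enum.
have im : (index m coef_supp < size coef_supp)%N by rewrite index_mem.
have := congr1 (fun X : 'rV[K]_(size coef_supp) => X 0 (Ordinal im)) vM0.
rewrite !mxE => E; rewrite -[RHS]E; apply: eq_bigr => j _.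
by rewrite /= mcoeffZ mxE nth_index.
Qed.

Lemma coef_mx_annihilator n1 (a : 'I_N -> {mpoly K[n1]}) :
  \sum_(j < N) (a j)%:MP * map_mpoly (@mpolyC n1 K) (c j) = 0 ->
  (\row_j a j) *m map_mx (@mpolyC n1 K) coef_mx = 0.
Proof.
move=> ac0; apply/rowP => k; rewrite !mxE.
have := congr1 (mcoeff (nth 0%MM coef_supp k)) ac0.
rewrite raddf_sum mcoeff0 => E; rewrite -[RHS]E; apply: eq_bigr => j _.
by rewrite !mxE /= mcoeffCM mcoeff_map_mpoly.
Qed.

(* Gaussian elimination on the coefficients of the [c j] splits a relation
   [\sum_j a j (x) c j = 0] into relations among the [a j] and among the [c j]. *)
Lemma tensor_relation_split n1 (a : 'I_N -> {mpoly K[n1]}) :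
  \sum_(j < N) (a j)%:MP * map_mpoly (@mpolyC n1 K) (c j) = 0 ->
  exists (Q P : 'M[K]_N) (r : nat), [/\ Q *m P = 1%:M,
    forall k : 'I_N, (k < r)%N -> \sum_(j < N) a j * (Q j k)%:MP = 0 &
    forall k : 'I_N, (r <= k)%N -> \sum_(j < N) P k j *: c j = 0].
Proof.
move=> ac0; set Q := col_ebase coef_mx.
exists Q, (invmx Q), (\rank coef_mx); split.
- by rewrite mulmxV ?col_ebase_unit.
- move=> k kr; have := col_ebase_annihilator (coef_mx_annihilator ac0) kr.
  by rewrite !mxE => E; rewrite -[RHS]E; apply: eq_bigr => j _; rewrite !mxE.
- move=> k rk; have vM0 : row k (invmx Q) *m coef_mx = 0.
    by rewrite -row_mul row_invmx_col_ebase_mul.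
  by rewrite -[RHS](coef_mx_comb_eq0 vM0); apply: eq_bigr => j _; rewrite mxE.
Qed.

End CoefficientMatrix.

Section KernelOfProduct.
Variables (K : fieldType) (nx ny nxy n1 n2 nc : nat).
Variables (fx : 'I_nx -> 'I_nxy) (fy : 'I_ny -> 'I_nxy).
Hypothesis fxy_cover : forall v, (exists i, fx i = v) \/ (exists j, fy j = v).
Variables (t1 : nx.-tuple {mpoly K[n1]}) (t2 : ny.-tuple {mpoly K[n2]}).
Variables (g1 : 'I_n1 -> 'I_nc) (g2 : 'I_n2 -> 'I_nc).
Hypotheses (g1_inj : injective g1) (g2_inj : injective g2)
  (g12_disjoint : forall i j, g1 i != g2 j).
Variable t : nxy.-tuple {mpoly K[nc]}.
Hypotheses (t_fx : forall i, tnth t (fx i) = vmap g1 (tnth t1 i))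
           (t_fy : forall j, tnth t (fy j) = vmap g2 (tnth t2 j)).

Lemma comp_vmap_fx p : vmap fx p \mPo t = vmap g1 (p \mPo t1).
Proof. by rewrite vmap_comp comp_vmap; congr (_ \mPo _); apply: eq_mktuple. Qed.

Lemma comp_vmap_fy p : vmap fy p \mPo t = vmap g2 (p \mPo t2).
Proof. by rewrite vmap_comp comp_vmap; congr (_ \mPo _); apply: eq_mktuple. Qed.

Lemma kernel_comp_split h : h \mPo t = 0 ->
  ideal_add (ideal_image (vmap fx) (fun a => a \mPo t1 = 0))
            (ideal_image (vmap fy) (fun b => b \mPo t2 = 0)) h.
Proof.
have [N [a [b ->]]] := mpoly_sum_of_products fxy_cover h; move=> h0.
have ab0 : \sum_(j < N) (a j \mPo t1)%:MP * map_mpoly (@mpolyC n1 K) (b j \mPo t2) = 0.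
  have := congr1 (separate_vars g1 g2) h0.
  rewrite [_ \mPo t]rmorph_sum rmorph_sum rmorph0 => E.
  rewrite -[RHS]E; apply: eq_bigr => j _.
  rewrite !rmorphM /= comp_vmap_fx comp_vmap_fy.
  by rewrite separate_vars_vmap1 // separate_vars_vmap2.
have [Q [P [r [QP Qa Pb]]]] := tensor_relation_split ab0.
rewrite (sum_mul_change_basis _ _ QP) (bigID (fun k : 'I_N => (k < r)%N)) /=.
eexists _, _; split; last split; last reflexivity.
- apply: ideal_gen_sum => k kr; rewrite mulrC; apply: ideal_genMl; apply: ideal_gen_mem.
  exists (\sum_(j < N) Q j k *: a j); split.
    rewrite raddf_sum -[RHS](Qa k kr); apply: eq_bigr => j _.
    by rewrite /= comp_mpolyZ mulrC mul_mpolyC.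
  by rewrite raddf_sum; apply: eq_bigr => j _; rewrite -vmapZ.
- apply: ideal_gen_sum => k kr; apply: ideal_genMl; apply: ideal_gen_mem.
  exists (\sum_(l < N) P k l *: b l); split.
    rewrite raddf_sum -[RHS](Pb k _); last by rewrite leqNgt.
    by apply: eq_bigr => l _; exact: comp_mpolyZ.
  by rewrite raddf_sum; apply: eq_bigr => l _; rewrite -vmapZ.
Qed.

End KernelOfProduct.

Lemma inj_surj_bij (A B : finType) (h : A -> B) :
  injective h -> (forall y, exists x, h x = y) -> bijective h.
Proof.
move=> h_inj h_surj.
have hc y : y \in codom h by have [x <-] := h_surj y; exact: codom_f.
exists (fun y => iinv (hc y)) => [x|y]; last exact: f_iinv.
by apply: h_inj; rewrite f_iinv.
Qed.

Lemma imset_set2 (A B : finType) (f : A -> B) (i j : A) :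
  f @: [set i; j] = [set f i; f j].
Proof. by rewrite imsetU1 imset_set1. Qed.

Section UnorderedPartitions.
Variable V : finType.

Lemma upart_of_proof (A : {set V}) : is_upart [set A; ~: A].
Proof. by apply/existsP; exists A. Qed.

Definition upart_of (A : {set V}) : upart V := exist _ [set A; ~: A] (upart_of_proof A).

(* Some block of [P]; which of the two blocks is chosen is irrelevant. *)
Definition upart_rep (P : upart V) : {set V} := odflt set0 [pick A in val P].

Lemma upartP (P : upart V) : exists A, val P = [set A; ~: A].
Proof. by case: P => P /= /existsP [A /eqP ->]; exists A. Qed.

Lemma upart_rep_in P : upart_rep P \in val P.
Proof.
rewrite /upart_rep; case: pickP => [A -> //|/=].
by have [A ->] := upartP P; move/(_ A); rewrite set21.
Qed.

Lemma upart_ofC A : upart_of (~: A) = upart_of A.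
Proof. by apply: val_inj; rewrite /= setCK setUC. Qed.

Lemma upart_repK P : upart_of (upart_rep P) = P.
Proof.
have := upart_rep_in P; have [A PA] := upartP P; rewrite PA in_set2.
by case/orP => /eqP ->; apply: val_inj; rewrite /= PA // setCK setUC.
Qed.

Lemma upart_of_eq A B : upart_of A = upart_of B -> B = A \/ B = ~: A.
Proof.
move/(congr1 val) => /= AB; have : B \in [set A; ~: A] by rewrite AB set21.
by rewrite in_set2 => /orP [] /eqP; [left|right].
Qed.

Lemma upart_rep_of A : upart_rep (upart_of A) = A \/ upart_rep (upart_of A) = ~: A.
Proof. exact: upart_of_eq (esym (upart_repK (upart_of A))). Qed.

Lemma upart_ind (Q : upart V -> Prop) : (forall A, Q (upart_of A)) -> forall P, Q P.
Proof. by move=> QA P; rewrite -(upart_repK P). Qed.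

Lemma card_upart (v0 : V) : #|{: upart V}| = (2 ^ #|V|.-1)%N.
Proof.
pose S := [set A : {set V} | v0 \in A].
have S_inj : {in S &, injective upart_of}.
  move=> A B; rewrite !inE => v0A v0B /upart_of_eq [] // BA.
  by move: v0B; rewrite BA inE v0A.
have -> : #|{: upart V}| = #|upart_of @: S|.
  rewrite -cardsT; congr #|pred_of_set _|; apply/setP => P; rewrite inE; symmetry.
  apply/imsetP; have [v0P|v0P] := boolP (v0 \in upart_rep P).
    by exists (upart_rep P); rewrite ?inE // upart_repK.
  by exists (~: upart_rep P); rewrite ?inE // upart_ofC upart_repK.
rewrite card_in_imset //.
have -> : S = (fun B => v0 |: B) @: powerset [set~ v0].
  apply/setP => A; rewrite inE; apply/idP/imsetP => [v0A|[B _ ->]]; last first.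
    by rewrite setU11.
  by exists (A :\ v0); rewrite ?setD1K // powersetE subsetC sub1set !inE eqxx.
rewrite card_in_imset ?card_powerset ?cardsC1 // => B C; rewrite !powersetE => sB sC BC.
have v0B : v0 \notin B by apply/negP => /(subsetP sB); rewrite !inE eqxx.
have v0C : v0 \notin C by apply/negP => /(subsetP sC); rewrite !inE eqxx.
by rewrite -(setU1K v0B) -(setU1K v0C) BC.
Qed.

End UnorderedPartitions.

Definition upart_map (V W : finType) (g : {set V} -> {set W}) (P : upart V) : upart W :=
  upart_of (g (upart_rep P)).

Lemma upart_map_of (V W : finType) (g : {set V} -> {set W}) A :
  (forall B, g (~: B) = ~: g B) -> upart_map g (upart_of A) = upart_of (g A).
Proof.
by move=> gC; rewrite /upart_map; case: (upart_rep_of A) => ->; rewrite ?gC ?upart_ofC.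
Qed.

Section Cuts.
Variables (V : finType) (e : rel V).

Lemma cards2I_eq1 (i j : V) (A : {set V}) : i != j ->
  (#|[set i; j] :&: A| == 1%N) = ((i \in A) != (j \in A)).
Proof.
move=> ij; have [iA|iA] := boolP (i \in A); have [jA|jA] := boolP (j \in A).
- rewrite (setIidPl _) ?cards2 ?ij //.
  by apply/subsetP => x; rewrite in_set2 => /orP [] /eqP ->.
- suff -> : [set i; j] :&: A = [set i] by rewrite cards1.
  apply/setP => x; rewrite !inE; have [->|_] := eqVneq x i; first by rewrite iA.
  by have [->|] := eqVneq x j; rewrite ?(negbTE jA).
- suff -> : [set i; j] :&: A = [set j] by rewrite cards1.
  apply/setP => x; rewrite !inE; have [->|_] := eqVneq x i.
    by rewrite (negbTE iA) (negbTE ij).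
  by have [->|] := eqVneq x j; rewrite ?jA.
- suff -> : [set i; j] :&: A = set0 by rewrite cards0.
  apply/setP => x; rewrite !inE; have [->|_] := eqVneq x i; first by rewrite (negbTE iA).
  by have [->|] := eqVneq x j; rewrite ?(negbTE jA).
Qed.

Lemma edgeP (E : edgeT e) : exists i j, e i j /\ val E = [set i; j].
Proof. by case: E => E /= /existsP [i /existsP [j /andP [eij /eqP ->]]]; exists i, j. Qed.

Lemma cuts_upart_of (E : edgeT e) (A : {set V}) i j :
  val E = [set i; j] -> i != j -> cuts (upart_of A) E = ((i \in A) != (j \in A)).
Proof.
move=> Eij ij; rewrite /cuts Eij; apply/existsP/idP => [[B /andP [] /=]|?].
  by rewrite in_set2 => /orP [] /eqP ->; rewrite cards2I_eq1 // !inE;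
    case: (i \in A); case: (j \in A).
by exists A; rewrite /= set21 cards2I_eq1.
Qed.

Lemma eq_cut_image (K : fieldType) (P Q : upart V) :
  (forall E : edgeT e, cuts P E = cuts Q E) -> cut_image K e P = cut_image K e Q.
Proof. by move=> PQ; apply: eq_bigr => E _; rewrite PQ. Qed.

End Cuts.

Section DisjointUnion.
Variables (V1 V2 : finType) (e1 : rel V1) (e2 : rel V2).
Hypotheses (irr1 : irreflexive e1) (irr2 : irreflexive e2).

Local Notation W := (V1 + V2)%type.
Local Notation eU := (dunion_rel e1 e2).

Lemma dunion_rel_neq i j : eU i j -> i != j.
Proof.
by case: i => [a|c]; case: j => [b|d] //= eij; apply: contraTneq eij => -[->];
  rewrite ?irr1 ?irr2.
Qed.

Lemma dunion_edgeP (E : edgeT eU) :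
  (exists a b, e1 a b /\ val E = [set inl a; inl b]) \/
  (exists c d, e2 c d /\ val E = [set inr c; inr d]).
Proof.
have [i [j [eij ->]]] := edgeP E.
by case: i eij => [a|c]; case: j => [b|d] //= eij; [left; exists a, b|right; exists c, d].
Qed.

Definition join_sets (A1 : {set V1}) (A2 : {set V2}) : {set W} :=
  [set x | match x with inl a => a \in A1 | inr b => b \in A2 end].

Definition upart_join (P : upart V1) (Q : upart V2) : upart W :=
  upart_of (join_sets (upart_rep P) (upart_rep Q)).
Definition upart_res1 : upart W -> upart V1 := upart_map (fun A => inl @^-1: A).
Definition upart_res2 : upart W -> upart V2 := upart_map (fun A => inr @^-1: A).

Lemma edge_inl_proof (E : edgeT e1) :
  [exists i, exists j, eU i j && (inl @: val E == [set i; j])].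
Proof.
have [a [b [eab ->]]] := edgeP E; apply/existsP; exists (inl a).
by apply/existsP; exists (inl b); rewrite imset_set2 /= eab eqxx.
Qed.

Lemma edge_inr_proof (E : edgeT e2) :
  [exists i, exists j, eU i j && (inr @: val E == [set i; j])].
Proof.
have [a [b [eab ->]]] := edgeP E; apply/existsP; exists (inr a).
by apply/existsP; exists (inr b); rewrite imset_set2 /= eab eqxx.
Qed.

Definition dunion_edge (E : (edgeT e1 + edgeT e2)%type) : edgeT eU :=
  match E with
  | inl E1 => exist _ (inl @: val E1) (edge_inl_proof E1)
  | inr E2 => exist _ (inr @: val E2) (edge_inr_proof E2)
  end.

Lemma dunion_edge_inj : injective dunion_edge.
Proof.
have inl_set_inj : injective (fun A : {set V1} => inl @: A : {set W}).
  by apply: imset_inj => a b [].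
have inr_set_inj : injective (fun A : {set V2} => inr @: A : {set W}).
  by apply: imset_inj => a b [].
move=> [E|E] [E'|E'] /(congr1 val) /= EE'.
- by congr inl; apply: val_inj; exact: inl_set_inj.
- have [a [b [_ Eab]]] := edgeP E.
  have : (inl a : W) \in inl @: val E by apply: imset_f; rewrite Eab set21.
  by rewrite EE' => /imsetP [].
- have [a [b [_ Eab]]] := edgeP E.
  have : (inr a : W) \in inr @: val E by apply: imset_f; rewrite Eab set21.
  by rewrite EE' => /imsetP [].
- by congr inr; apply: val_inj; exact: inr_set_inj.
Qed.

Lemma dunion_edge_bij : bijective dunion_edge.
Proof.
apply: inj_surj_bij dunion_edge_inj _ => E.
case: (dunion_edgeP E) => [[a [b [eab Eab]]]|[c [d [ecd Ecd]]]].
  have E1 : [exists i, exists j, e1 i j && ([set a; b] == [set i; j])].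
    by apply/existsP; exists a; apply/existsP; exists b; rewrite eab eqxx.
  by exists (inl (exist _ [set a; b] E1)); apply: val_inj; rewrite /= Eab imset_set2.
have E2 : [exists i, exists j, e2 i j && ([set c; d] == [set i; j])].
  by apply/existsP; exists c; apply/existsP; exists d; rewrite ecd eqxx.
by exists (inr (exist _ [set c; d] E2)); apply: val_inj; rewrite /= Ecd imset_set2.
Qed.

Lemma cuts_upart_join_inl P Q (E : edgeT e1) :
  cuts (upart_join P Q) (dunion_edge (inl E)) = cuts P E.
Proof.
have [a [b [eab Eab]]] := edgeP E.
have ab : a != b by apply: contraTneq eab => ->; rewrite irr1.
have Eab' : val (dunion_edge (inl E)) = [set inl a; inl b] by rewrite /= Eab imset_set2.
rewrite /upart_join (cuts_upart_of _ Eab') // -[in RHS](upart_repK P).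
by rewrite (cuts_upart_of _ Eab ab) !inE.
Qed.

Lemma cuts_upart_join_inr P Q (E : edgeT e2) :
  cuts (upart_join P Q) (dunion_edge (inr E)) = cuts Q E.
Proof.
have [a [b [eab Eab]]] := edgeP E.
have ab : a != b by apply: contraTneq eab => ->; rewrite irr2.
have Eab' : val (dunion_edge (inr E)) = [set inr a; inr b] by rewrite /= Eab imset_set2.
rewrite /upart_join (cuts_upart_of _ Eab') // -[in RHS](upart_repK Q).
by rewrite (cuts_upart_of _ Eab ab) !inE.
Qed.

Lemma cuts_upart_join_res P (E : edgeT eU) :
  cuts (upart_join (upart_res1 P) (upart_res2 P)) E = cuts P E.
Proof.
elim/upart_ind: P => A; rewrite /upart_join /upart_res1 /upart_res2.
rewrite !upart_map_of => [|B|B]; rewrite ?preimsetC //.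
case: (dunion_edgeP E) => [[a [b [eab Eab]]]|[c [d [ecd Ecd]]]].
  rewrite !(cuts_upart_of _ Eab (dunion_rel_neq (i := inl a) (j := inl b) eab)) !inE.
  by case: (upart_rep_of (inl @^-1: A)) => ->; rewrite !inE;
    case: (inl a \in A); case: (inl b \in A).
rewrite !(cuts_upart_of _ Ecd (dunion_rel_neq (i := inr c) (j := inr d) ecd)) !inE.
by case: (upart_rep_of (inr @^-1: A)) => ->; rewrite !inE;
  case: (inr c \in A); case: (inr d \in A).
Qed.

End DisjointUnion.

Section ZeroSum.
Variables (V1 V2 : finType) (e1 : rel V1) (e2 : rel V2).
Hypotheses (irr1 : irreflexive e1) (irr2 : irreflexive e2).
Variables (u1 : V1) (u2 : V2).

Local Notation W := (V1 + V2)%type.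
Local Notation eU := (dunion_rel e1 e2).
Local Notation Z := (zs_vert V1 u2).
Local Notation eZ := (zs_rel e1 e2 u1 u2).

Lemma glue_neq x : glue u1 u2 x != inr u2.
Proof. by rewrite /glue; case: (eqVneq x (inr u2)). Qed.

Lemma glue_id x : x != inr u2 -> glue u1 u2 x = x.
Proof. by rewrite /glue => /negbTE ->. Qed.

Definition zs_proj (x : W) : Z := exist _ (glue u1 u2 x) (glue_neq x).

Lemma zs_proj_val (y : Z) : zs_proj (val y) = y.
Proof. by apply: val_inj; rewrite /= glue_id //; exact: (valP y). Qed.

Lemma zs_proj_inl a : val (zs_proj (inl a)) = inl a.
Proof. by rewrite /= glue_id. Qed.

Lemma zs_proj_inr c : c != u2 -> val (zs_proj (inr c)) = inr c.
Proof. by move=> cu2; rewrite /= glue_id. Qed.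

Lemma zs_proj_u2 : zs_proj (inr u2) = zs_proj (inl u1).
Proof. by apply: val_inj; rewrite zs_proj_inl /= /glue eqxx. Qed.

Lemma zs_proj_inl_eq a b : (zs_proj (inl a) == zs_proj (inl b)) = (a == b).
Proof. by apply/eqP/eqP => [/(congr1 val)|-> //]; rewrite !zs_proj_inl => -[]. Qed.

Lemma zs_proj_inr_eq c d : (zs_proj (inr c) == zs_proj (inr d)) = (c == d).
Proof.
apply/eqP/eqP => [/(congr1 val)|-> //].
by have [->|cu2] := eqVneq c u2; have [->|du2] := eqVneq d u2;
  rewrite ?zs_proj_u2 ?zs_proj_inl ?zs_proj_inr // => -[].
Qed.

Lemma zs_proj_neq i j : eU i j -> zs_proj i != zs_proj j.
Proof.
case: i => [a|c]; case: j => [b|d] //= eij.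
  by rewrite zs_proj_inl_eq; apply: contraTneq eij => ->; rewrite irr1.
by rewrite zs_proj_inr_eq; apply: contraTneq eij => ->; rewrite irr2.
Qed.

Lemma zs_edge_proof (E : edgeT eU) :
  [exists i, exists j, eZ i j && (zs_proj @: val E == [set i; j])].
Proof.
have [i [j [eij ->]]] := edgeP E.
apply/existsP; exists (zs_proj i); apply/existsP; exists (zs_proj j).
by rewrite imset_set2 eqxx andbT; apply/existsP; exists (i, j); rewrite /= eij !eqxx.
Qed.

Definition zs_edge (E : edgeT eU) : edgeT eZ :=
  exist _ (zs_proj @: val E) (zs_edge_proof E).

(* An edge of the zero-sum lies either in G1 or in G2, and it is in G2
   exactly when one of its endpoints is a vertex of G2 other than u2. *)
Definition zs_edge_decode (S : {set Z}) : {set W} :=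
  if [exists y in S, ~~ is_inl (val y)] then [set x | ~~ is_inl x & zs_proj x \in S]
  else [set x | is_inl x & zs_proj x \in S].

Lemma zs_edge_decodeK (E : edgeT eU) : zs_edge_decode (zs_proj @: val E) = val E.
Proof.
rewrite /zs_edge_decode; case: (dunion_edgeP E) => [[a [b [_ ->]]]|[c [d [ecd ->]]]].
  rewrite imset_set2 (_ : [exists y in _, _] = false); last first.
    by apply/negbTE/existsP => -[y /andP []]; rewrite in_set2 => /orP [] /eqP ->;
      rewrite zs_proj_inl.
  by apply/setP => -[x|x]; rewrite !inE //= !zs_proj_inl_eq.
have cd : c != d by apply: contraTneq ecd => ->; rewrite irr2.
rewrite imset_set2 (_ : [exists y in _, _] = true); last first.
  apply/existsP; have [cu2|cu2] := eqVneq c u2.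
    by exists (zs_proj (inr d)); rewrite set22 zs_proj_inr // -cu2 eq_sym.
  by exists (zs_proj (inr c)); rewrite set21 zs_proj_inr.
by apply/setP => -[x|x]; rewrite !inE //= !zs_proj_inr_eq.
Qed.

Lemma zs_edge_inj : injective zs_edge.
Proof.
move=> E E' /(congr1 val) /= EE'; apply: val_inj.
by rewrite -zs_edge_decodeK EE' zs_edge_decodeK.
Qed.

Lemma zs_edge_surj (E0 : edgeT eZ) : exists E, zs_edge E = E0.
Proof.
have [a [b [/existsP [p /and3P [ep /eqP pa /eqP pb]] E0ab]]] := edgeP E0.
have Ep : [exists i, exists j, eU i j && ([set p.1; p.2] == [set i; j])].
  by apply/existsP; exists p.1; apply/existsP; exists p.2; rewrite ep eqxx.
exists (exist _ [set p.1; p.2] Ep : edgeT eU); apply: val_inj; rewrite /= E0ab imset_set2.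
by congr [set _; _]; apply: val_inj.
Qed.

Lemma zs_edge_bij : bijective zs_edge.
Proof. exact: inj_surj_bij zs_edge_inj zs_edge_surj. Qed.

Definition zs_lift : upart Z -> upart W := upart_map (fun A => zs_proj @^-1: A).

Lemma zs_lift_of A : zs_lift (upart_of A) = upart_of (zs_proj @^-1: A).
Proof. by apply: upart_map_of => B; rewrite preimsetC. Qed.

Lemma cuts_zs_lift P (E : edgeT eU) : cuts (zs_lift P) E = cuts P (zs_edge E).
Proof.
elim/upart_ind: P => A; rewrite zs_lift_of; have [i [j [eij Eij]]] := edgeP E.
rewrite (cuts_upart_of _ Eij (dunion_rel_neq irr1 irr2 eij)).
by rewrite (cuts_upart_of _ _ (zs_proj_neq eij)) ?inE //= Eij imset_set2.
Qed.

Lemma zs_lift_inj : injective zs_lift.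
Proof.
have preim_inj : injective (fun A : {set Z} => zs_proj @^-1: A).
  move=> A B AB; apply/setP => y.
  by have := congr1 (fun S : {set W} => val y \in S) AB; rewrite !inE zs_proj_val.
elim/upart_ind => A; elim/upart_ind => B; rewrite !zs_lift_of.
by move/upart_of_eq => [/preim_inj -> //|]; rewrite -preimsetC => /preim_inj ->;
  rewrite upart_ofC.
Qed.

Definition aligned (P : upart W) := (inl u1 \in upart_rep P) == (inr u2 \in upart_rep P).

Lemma aligned_of A : aligned (upart_of A) = ((inl u1 \in A) == (inr u2 \in A)).
Proof.
by rewrite /aligned; case: (upart_rep_of A) => ->; rewrite ?inE //;
  case: (inl u1 \in A); case: (inr u2 \in A).
Qed.

Lemma aligned_zs_lift P : aligned (zs_lift P).
Proof. by elim/upart_ind: P => A; rewrite zs_lift_of aligned_of !inE zs_proj_u2. Qed.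

(* Complementing the G2-part of a block does not change any cut. *)
Definition flip_right (A : {set W}) : {set W} :=
  [set x | if x is inl _ then x \in A else x \notin A].

Definition upart_flip : upart W -> upart W := upart_map flip_right.

Lemma upart_flip_of A : upart_flip (upart_of A) = upart_of (flip_right A).
Proof. by apply: upart_map_of => B; apply/setP => -[x|x]; rewrite !inE. Qed.

Lemma upart_flipK : involutive upart_flip.
Proof.
by elim/upart_ind => A; rewrite !upart_flip_of; congr upart_of;
  apply/setP => -[x|x]; rewrite !inE ?negbK.
Qed.

Lemma aligned_flip P : aligned (upart_flip P) = ~~ aligned P.
Proof.
elim/upart_ind: P => A; rewrite upart_flip_of !aligned_of !inE.
by case: (inl u1 \in _); case: (inr u2 \in _).
Qed.

Lemma cuts_flip P (E : edgeT eU) : cuts (upart_flip P) E = cuts P E.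
Proof.
elim/upart_ind: P => A; rewrite upart_flip_of.
case: (dunion_edgeP E) => [[a [b [eab Eab]]]|[c [d [ecd Ecd]]]].
  have ab := dunion_rel_neq irr1 irr2 (i := inl a) (j := inl b) eab.
  by rewrite !(cuts_upart_of _ Eab ab) !inE.
have cd := dunion_rel_neq irr1 irr2 (i := inr c) (j := inr d) ecd.
by rewrite !(cuts_upart_of _ Ecd cd) !inE; case: (inr c \in _); case: (inr d \in _).
Qed.

Definition zs_restrict (P : upart W) : upart Z :=
  upart_of [set y : Z | val y \in upart_rep (if aligned P then P else upart_flip P)].

Lemma zs_lift_restrict P :
  zs_lift (zs_restrict P) = if aligned P then P else upart_flip P.
Proof.
set P' := if aligned P then P else upart_flip P.
have P'_aligned : aligned P' by rewrite /P'; case: ifP => // /negbT; rewrite aligned_flip.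
rewrite zs_lift_of -[RHS]upart_repK; congr upart_of.
apply/setP => x; rewrite !inE /=; have [->|xu2] := eqVneq x (inr u2); last by rewrite glue_id.
by rewrite /glue eqxx; move/eqP: P'_aligned.
Qed.

End ZeroSum.

Lemma Xv_homog (K : fieldType) (T : finType) (t : T) : Xv K t \is 1.-homog.
Proof. by rewrite dhomogX /= mdeg1. Qed.

Section CutMaps.
Variable K : fieldType.

HB.instance Definition _ (V : finType) (e : rel V) :=
  GRing.RMorphism.copy (cut_map K e)
    (comp_mpoly [tuple cut_image K e (enum_val i) | i < #|{: upart V}|]).

Lemma cut_mapXv (V : finType) (e : rel V) (P : upart V) :
  cut_map K e (Xv K P) = cut_image K e P.
Proof. by rewrite /cut_map /Xv comp_mpolyXU -tnth_nth tnth_mktuple enum_rankK. Qed.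

Definition edge_var_map (A B : finType) (f : A -> B) (v : 'I_#|{: A + A}|) :
    'I_#|{: B + B}| :=
  enum_rank (match enum_val v with inl a => inl (f a) | inr a => inr (f a) end).

Lemma edge_var_mapK (A B : finType) (f : A -> B) (g : B -> A) :
  cancel f g -> cancel (edge_var_map f) (edge_var_map g).
Proof.
move=> fK v; rewrite /edge_var_map enum_rankK.
by case Ev: (enum_val v) => [a|a]; rewrite fK -Ev enum_valK.
Qed.

Lemma edge_var_map_inj (A B : finType) (f : A -> B) :
  injective f -> injective (edge_var_map f).
Proof.
move=> f_inj v w /enum_rank_inj.
by case Ev: (enum_val v) => [a|a]; case Ew: (enum_val w) => [b|b] // -[/f_inj ab];
  apply: enum_val_inj; rewrite Ev Ew ab.
Qed.

Lemma vmap_cut_image (V V' : finType) (e : rel V) (e' : rel V')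
    (f : edgeT e -> edgeT e') (P : upart V) :
  vmap (edge_var_map f) (cut_image K e P) =
  \prod_(E : edgeT e) (if cuts P E then Xv K (inl (f E) : (edgeT e' + edgeT e')%type)
                       else Xv K (inr (f E) : (edgeT e' + edgeT e')%type)).
Proof.
rewrite rmorph_prod; apply: eq_bigr => E _.
by case: (cuts P E); rewrite /= /Xv vmapX /edge_var_map enum_rankK.
Qed.

End CutMaps.

Section ZeroSumCutIdeal.
Variables (K : fieldType) (V1 V2 : finType) (e1 : rel V1) (e2 : rel V2).
Hypotheses (irr1 : irreflexive e1) (irr2 : irreflexive e2).
Variables (u1 : V1) (u2 : V2).

Local Notation W := (V1 + V2)%type.
Local Notation eU := (dunion_rel e1 e2).
Local Notation Z := (zs_vert V1 u2).
Local Notation eZ := (zs_rel e1 e2 u1 u2).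
Local Notation MU := #|{: upart W}|.
Local Notation M0 := #|{: upart Z}|.
Local Notation zs_edge := (@zs_edge V1 V2 e1 e2 u1 u2).
Local Notation zs_lift := (@zs_lift V1 V2 u1 u2).
Local Notation zs_restrict := (@zs_restrict V1 V2 u1 u2).

Lemma zs_edge_codom (E0 : edgeT eZ) : E0 \in codom zs_edge.
Proof. by have [E <-] := zs_edge_surj E0; exact: codom_f. Qed.

Definition zs_edge_inv (E0 : edgeT eZ) : edgeT eU := iinv (zs_edge_codom E0).

Lemma zs_edge_invK : cancel zs_edge_inv zs_edge.
Proof. by move=> E0; exact: f_iinv. Qed.

Lemma zs_edgeK : cancel zs_edge zs_edge_inv.
Proof. by move=> E; apply: (@zs_edge_inj _ _ _ _ irr2 u1 u2); rewrite zs_edge_invK. Qed.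

Local Notation zs_var := (edge_var_map zs_edge_inv).

Lemma vmap_zs_cut_image P : vmap zs_var (cut_image K eZ P) = cut_image K eU (zs_lift P).
Proof.
rewrite vmap_cut_image /cut_image (reindex zs_edge); last exact/onW_bij/zs_edge_bij.
by apply: eq_bigr => E _; rewrite zs_edgeK cuts_zs_lift.
Qed.

Definition zs_upart_var (i : 'I_M0) : 'I_MU := enum_rank (zs_lift (enum_val i)).
Definition zs_restrict_var (k : 'I_MU) : 'I_M0 := enum_rank (zs_restrict (enum_val k)).

Lemma zs_upart_var_inj : injective zs_upart_var.
Proof. by move=> i j /enum_rank_inj /zs_lift_inj /enum_val_inj. Qed.

Lemma cut_map_zs_upart_var q :
  cut_map K eU (vmap zs_upart_var q) = vmap zs_var (cut_map K eZ q).
Proof.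
rewrite /cut_map vmap_comp comp_vmap; congr (_ \mPo _); apply: eq_mktuple => i.
by rewrite !tnth_mktuple enum_rankK vmap_zs_cut_image.
Qed.

Lemma cut_image_zs_lift_restrict P :
  cut_image K eU (zs_lift (zs_restrict P)) = cut_image K eU P.
Proof.
rewrite zs_lift_restrict; case: ifP => // _.
by apply: eq_cut_image => E; exact: cuts_flip.
Qed.

(* The substitution x_P := x_P', where P' is the aligned one among P and its flip. *)
Lemma vmap_zs_retract (p : {mpoly K[MU]}) :
  vmap zs_upart_var (vmap zs_restrict_var p) =
  p \mPo [tuple 'X_(zs_upart_var (zs_restrict_var k)) | k < MU].
Proof.
rewrite [LHS]/vmap vmap_comp; congr (_ \mPo _).
by apply: eq_mktuple => k; rewrite tnth_mktuple.
Qed.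

Lemma cut_map_zs_retract p :
  cut_map K eU (vmap zs_upart_var (vmap zs_restrict_var p)) = cut_map K eU p.
Proof.
rewrite vmap_zs_retract /cut_map comp_mpolyA; congr (_ \mPo _).
apply: eq_mktuple => k; rewrite !tnth_mktuple comp_mpolyXU -tnth_nth tnth_mktuple.
by rewrite /zs_upart_var /zs_restrict_var !enum_rankK cut_image_zs_lift_restrict.
Qed.

Lemma cut_ideal_zs_restrict p :
  cut_ideal K eU p -> cut_ideal K eZ (vmap zs_restrict_var p).
Proof.
move=> p0; apply: (can_inj (vmapK (edge_var_mapK zs_edge_invK))).
by rewrite -cut_map_zs_upart_var cut_map_zs_retract p0 !rmorph0.
Qed.

Lemma card_zs_vert : #|{: Z}| = (#|V1| + #|V2|).-1.
Proof.
rewrite card_sig -card_sum -(cardC1 (inr u2 : W)).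
by apply: eq_card.
Qed.

Lemma card_upart_zs : (2 ^ (#|V1| + #|V2| - 2))%N = M0.
Proof.
by rewrite (card_upart (zs_proj u1 u2 (inl u1))) card_zs_vert -!subn1 -subnDA.
Qed.

Local Notation N := (2 ^ (#|V1| + #|V2| - 2))%N.

Definition zs_upart_at (i : 'I_N) : upart Z := enum_val (cast_ord card_upart_zs i).

Lemma zs_upart_at_inj : injective zs_upart_at.
Proof. by move=> i j /enum_val_inj /cast_ord_inj. Qed.

Definition flip_form (i : 'I_N) : {mpoly K[MU]} :=
  Xv K (zs_lift (zs_upart_at i)) - Xv K (upart_flip (zs_lift (zs_upart_at i))).

Definition flip_ideal := ideal_gen (fun q => exists i, q = flip_form i).

Lemma zs_retract_diff p :
  flip_ideal (p - vmap zs_upart_var (vmap zs_restrict_var p)).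
Proof.
rewrite vmap_zs_retract; apply: ideal_gen_trans (subst_diff_ideal _ p) => _ [k ->].
rewrite tnth_mktuple /zs_upart_var /zs_restrict_var enum_rankK zs_lift_restrict.
case: ifP => [_|not_aligned]; first by rewrite enum_valK subrr; exact: ideal_gen0.
pose j := cast_ord (esym card_upart_zs) (enum_rank (zs_restrict (enum_val k))).
have at_j : zs_lift (zs_upart_at j) = upart_flip (enum_val k).
  by rewrite /zs_upart_at /j cast_ordKV enum_rankK zs_lift_restrict not_aligned.
have -> : 'X_k - 'X_(enum_rank (upart_flip (enum_val k))) = - flip_form j.
  by rewrite /flip_form at_j upart_flipK /Xv enum_valK opprB.
by apply: ideal_genN; apply: ideal_gen_mem; exists j.
Qed.

Lemma cut_ideal_zs_sub p : cut_ideal K eU p ->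
  ideal_add (ideal_image (vmap zs_upart_var) (cut_ideal K eZ)) flip_ideal p.
Proof.
move=> p0; exists (vmap zs_upart_var (vmap zs_restrict_var p)).
exists (p - vmap zs_upart_var (vmap zs_restrict_var p)); split; last split.
- apply: ideal_gen_mem; exists (vmap zs_restrict_var p).
  by split => //; exact: cut_ideal_zs_restrict.
- exact: zs_retract_diff.
- by rewrite addrC subrK.
Qed.

Lemma cut_ideal_zs_sup p :
  ideal_add (ideal_image (vmap zs_upart_var) (cut_ideal K eZ)) flip_ideal p ->
  cut_ideal K eU p.
Proof.
move=> [a [b [a0 [b0 ->]]]]; rewrite /cut_ideal rmorphD.
rewrite (ideal_gen_kernel (F := cut_map K eU) _ a0) => [|_ [q [q0 ->]]]; last first.
  by rewrite /= cut_map_zs_upart_var q0 rmorph0.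
rewrite (ideal_gen_kernel (F := cut_map K eU) _ b0) ?addr0 // => _ [i ->].
by rewrite rmorphB /= !cut_mapXv (eq_cut_image _ (cuts_flip irr1 irr2 _)) subrr.
Qed.

Definition eval_at (P0 : upart W) (p : {mpoly K[MU]}) : K :=
  p.@[fun v => (v == enum_rank P0)%:R].

HB.instance Definition _ P0 :=
  GRing.RMorphism.copy (eval_at P0) (meval (fun v => (v == enum_rank P0)%:R)).

Lemma eval_atXv P0 P : eval_at P0 (Xv K P) = (P == P0)%:R.
Proof. by rewrite /eval_at /Xv mevalXU (inj_eq enum_rank_inj). Qed.

Lemma eval_flip_form i j :
  eval_at (upart_flip (zs_lift (zs_upart_at j))) (flip_form i) = - (i == j)%:R.
Proof.
rewrite /eval_at mevalB -!/(eval_at _ _) !eval_atXv.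
have -> : (zs_lift (zs_upart_at i) == upart_flip (zs_lift (zs_upart_at j))) = false.
  apply/negbTE/eqP => ij; have := aligned_zs_lift u1 (zs_upart_at i).
  by rewrite ij aligned_flip aligned_zs_lift.
rewrite (inj_eq (can_inj (@upart_flipK V1 V2))) (inj_eq (@zs_lift_inj V1 V2 u1 u2)).
by rewrite (inj_eq zs_upart_at_inj) sub0r.
Qed.

Lemma flip_ideal_min_gen : min_gen_linear flip_ideal N.
Proof.
exists flip_form; split; [|split; [|split]] => //.
- move=> i j ij; have := congr1 (eval_at (upart_flip (zs_lift (zs_upart_at j)))) ij.
  rewrite !eval_flip_form eqxx; have [//|_ /eqP] := eqVneq i j.
  by rewrite oppr0 eq_sym oppr_eq0 oner_eq0.
- by move=> i; rewrite rpredB ?Xv_homog.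
- move=> j gen_j; have : eval_at (upart_flip (zs_lift (zs_upart_at j))) (flip_form j) = 0.
    apply: (ideal_gen_kernel (F := eval_at _) _ (proj2 (gen_j _) _)) => [_ [i [ij ->]]|].
      by rewrite /= eval_flip_form (negbTE ij) oppr0.
    by apply: ideal_gen_mem; exists j.
  by rewrite eval_flip_form eqxx => /eqP; rewrite oppr_eq0 oner_eq0.
Qed.

End ZeroSumCutIdeal.

Section SegreCutIdeal.
Variables (K : fieldType) (V1 V2 : finType) (e1 : rel V1) (e2 : rel V2).
Hypotheses (irr1 : irreflexive e1) (irr2 : irreflexive e2).

Local Notation W := (V1 + V2)%type.
Local Notation eU := (dunion_rel e1 e2).
Local Notation MU := #|{: upart W}|.
Local Notation T1 := (upart V1).
Local Notation T2 := (upart V2).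
Local Notation dunion_edge := (@dunion_edge V1 V2 e1 e2).

Definition edge_var1 := edge_var_map (fun E : edgeT e1 => dunion_edge (inl E)).
Definition edge_var2 := edge_var_map (fun E : edgeT e2 => dunion_edge (inr E)).

Lemma edge_var1_inj : injective edge_var1.
Proof. by apply: edge_var_map_inj => E E' /dunion_edge_inj [->]. Qed.

Lemma edge_var2_inj : injective edge_var2.
Proof. by apply: edge_var_map_inj => E E' /dunion_edge_inj [->]. Qed.

Lemma edge_var12 i j : edge_var1 i != edge_var2 j.
Proof.
apply/eqP => /enum_rank_inj.
by case: (enum_val i) => E; case: (enum_val j) => E' // EE';
  case: (dunion_edge_inj (congr1 (fun x => match x with inl y | inr y => y end) EE')).
Qed.

Lemma cut_image_upart_join P Q :
  vmap edge_var1 (cut_image K e1 P) * vmap edge_var2 (cut_image K e2 Q) =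
  cut_image K eU (upart_join P Q).
Proof.
rewrite !vmap_cut_image [RHS](reindex dunion_edge); last exact/onW_bij/dunion_edge_bij.
rewrite big_sumType; congr (_ * _); apply: eq_bigr => E _.
  by rewrite cuts_upart_join_inl.
by rewrite cuts_upart_join_inr.
Qed.

Definition segre_var (i : 'I_#|{: T1 * T2}|) : {mpoly K[MU]} :=
  Xv K (upart_join (enum_val i).1 (enum_val i).2).

Definition cut_factors : #|{: T1 + T2}|.-tuple {mpoly K[#|{: edgeT eU + edgeT eU}|]} :=
  [tuple match enum_val v with
         | inl P => vmap edge_var1 (cut_image K e1 P)
         | inr Q => vmap edge_var2 (cut_image K e2 Q) end | v < #|{: T1 + T2}|].

Lemma cut_map_segre f :
  cut_map K eU (f \mPo [tuple segre_var i | i < #|{: T1 * T2}|]) = segre_map f \mPo cut_factors.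
Proof.
rewrite /cut_map /segre_map !comp_mpolyA; congr (_ \mPo _); apply: eq_mktuple => i.
rewrite !tnth_mktuple -/(cut_map K eU _) cut_mapXv rmorphM /=.
by rewrite /Xv !comp_mpolyXU -!tnth_nth !tnth_mktuple !enum_rankK cut_image_upart_join.
Qed.

Local Notation cut_tuple e := [tuple cut_image K e (enum_val i) | i < _].

Lemma cut_factors_inl (i : 'I_#|{: T1}|) :
  tnth cut_factors (enum_rank (inl (enum_val i) : (T1 + T2)%type)) =
  vmap edge_var1 (tnth (cut_tuple e1) i).
Proof. by rewrite !tnth_mktuple enum_rankK. Qed.

Lemma cut_factors_inr (j : 'I_#|{: T2}|) :
  tnth cut_factors (enum_rank (inr (enum_val j) : (T1 + T2)%type)) =
  vmap edge_var2 (tnth (cut_tuple e2) j).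
Proof. by rewrite !tnth_mktuple enum_rankK. Qed.

Lemma segre_cut_ideal f :
  cut_ideal K eU (f \mPo [tuple segre_var i | i < _]) <-> segre_ideal K e1 e2 f.
Proof.
rewrite /cut_ideal cut_map_segre; split => [|[a [b [a0 [b0 ->]]]]].
  have cover v :
      (exists i : 'I_#|{: T1}|, enum_rank (inl (enum_val i) : (T1 + T2)%type) = v) \/
      (exists j : 'I_#|{: T2}|, enum_rank (inr (enum_val j) : (T1 + T2)%type) = v).
    case Ev: (enum_val v) => [P|Q]; [left; exists (enum_rank P)|right; exists (enum_rank Q)];
      by rewrite enum_rankK -Ev enum_valK.
  exact: (@kernel_comp_split K _ _ _ _ _ _ _ _ cover (cut_tuple e1) (cut_tuple e2) _ _
    edge_var1_inj edge_var2_inj edge_var12 cut_factors cut_factors_inl cut_factors_inr).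
rewrite rmorphD (ideal_gen_kernel (F := comp_mpoly cut_factors) _ a0); last first.
  move=> _ [q [q0 ->]]; rewrite /= (comp_vmap_fx cut_factors_inl).
  by move: q0; rewrite /cut_ideal /cut_map => ->; rewrite rmorph0.
rewrite (ideal_gen_kernel (F := comp_mpoly cut_factors) _ b0) ?addr0 //.
move=> _ [q [q0 ->]]; rewrite /= (comp_vmap_fy cut_factors_inr).
by move: q0; rewrite /cut_ideal /cut_map => ->; rewrite rmorph0.
Qed.

Lemma cut_ideal_var_segre (k : 'I_MU) :
  cut_ideal K eU ('X_k - ('X_(enum_rank (upart_res1 (enum_val k), upart_res2 (enum_val k)))
                           \mPo [tuple segre_var i | i < _])).
Proof.
rewrite comp_mpolyXU -tnth_nth tnth_mktuple /segre_var enum_rankK /=.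
have -> : ('X_k : {mpoly K[MU]}) = Xv K (enum_val k) by rewrite /Xv enum_valK.
rewrite /cut_ideal rmorphB /= !cut_mapXv.
by rewrite (eq_cut_image _ (cuts_upart_join_res irr1 irr2 _)) subrr.
Qed.

End SegreCutIdeal.

Unset Implicit Arguments.
Set Strict Implicit.

Theorem proposition5p2 (K : fieldType) (V1 V2 : finType)
    (e1 : rel V1) (e2 : rel V2)
    (sym1 : ssrbool.symmetric e1) (irr1 : irreflexive e1)
    (sym2 : ssrbool.symmetric e2) (irr2 : irreflexive e2)
    (u1 : V1) (u2 : V2) :
  (exists sigma : 'I_#|{: upart (zs_vert V1 u2)}| -> 'I_#|{: upart (V1 + V2)}|,
     injective sigma /\
     exists L : {mpoly K[#|{: upart (V1 + V2)}|]} -> Prop,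
       min_gen_linear L (2 ^ (#|V1| + #|V2| - 2)) /\
       ideal_eq (cut_ideal K (dunion_rel e1 e2))
         (ideal_add (ideal_image (vmap (K := K) sigma)
                                 (cut_ideal K (zs_rel e1 e2 u1 u2))) L))
  /\
  (exists lb : 'I_#|{: upart V1 * upart V2}| -> {mpoly K[#|{: upart (V1 + V2)}|]},
     (forall i, lb i \is 1.-homog) /\
     (forall f : {mpoly K[#|{: upart V1 * upart V2}|]},
        cut_ideal K (dunion_rel e1 e2) (f \mPo [tuple lb i | i < _])
        <-> segre_ideal K e1 e2 f) /\
     (forall k : 'I_#|{: upart (V1 + V2)}|,
        exists f : {mpoly K[#|{: upart V1 * upart V2}|]},
          f \is 1.-homog /\
          cut_ideal K (dunion_rel e1 e2) ('X_k - (f \mPo [tuple lb i | i < _])))).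
Proof.
split.
  exists (zs_upart_var u1 (u2 := u2)); split; first exact: zs_upart_var_inj.
  exists (flip_ideal (K := K) u1 u2); split; first exact: flip_ideal_min_gen.
  by split; [exact: cut_ideal_zs_sub | exact: cut_ideal_zs_sup].
exists (@segre_var K V1 V2); split; first by move=> i; exact: Xv_homog.
split; first exact: segre_cut_ideal.
move=> k; exists 'X_(enum_rank (upart_res1 (enum_val k), upart_res2 (enum_val k))).
by split; [exact: Xv_homog | exact: cut_ideal_var_segre].
Qed.
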